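(* Let $A\in\mathcal F$ with $\mathbb P(A)>0$, and for $k\ge1$ let $m_k(\omega)$ be the $k$-th visiting time of the $\theta$-orbit of $\omega$ to $A$, i.e. $m_1(\omega)=\min\{n\ge1:\theta^n\omega\in A\}$ and $m_{k+1}(\omega)=\min\{n>m_k(\omega):\theta^n\omega\in A\}$. If $m_1\in L^p(\Omega,\mathcal F,\mathbb P)$ for some $p>0$, then for every $0<\delta<p$ there exists $B\in L^{p/2-\delta}(\Omega,\mathcal F,\mathbb P)$ such that for $\mathbb P$-a.e. $\omega$ and all $k\ge1$, $$m_k(\omega)\le B(\omega)k^{1+1/p+\delta}.$$
   Context: $(\Omega,\mathcal F,\mathbb P,\theta)$ is the shift system of a stationary sequence indexed by $\mathbb Z$; $\theta$ is an invertible measurable map preserving $\mathbb P$. *)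

From HB Require Import structures.
From mathcomp Require Import all_boot all_order all_algebra.
From mathcomp Require Import all_classical all_reals all_analysis measurable_realfun.
Set Implicit Arguments. Unset Strict Implicit. Unset Printing Implicit Defensive.
Import Order.TTheory GRing.Theory Num.Theory.
Local Open Scope classical_set_scope.
Local Open Scope ring_scope.

Definition invertible_mp {d} {T : measurableType d} {R : realType}
  (P : probability T R) (theta : T -> T) : Prop :=
  measurable_fun setT theta /\
  exists thinv : T -> T,
    [/\ measurable_fun setT thinv, cancel theta thinv, cancel thinv theta &
        forall S, measurable S -> P (theta @^-1` S) = P S].

(* visit_time A theta k w : the k-th visiting time (k >= 1) of the
   theta-orbit of w to A, +oo if there is no k-th visit.
   visit_time _ _ 0 w = 0 (auxiliary), and
   visit_time (k+1) w = min { n : n > visit_time k w, theta^n w \in A }. *)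
Fixpoint visit_time {T : Type} {R : realType} (A : set T) (theta : T -> T)
  (k : nat) (w : T) : \bar R :=
  match k with
  | 0 => 0%E
  | k'.+1 => ereal_inf [set (n%:R)%:E | n in
                [set n : nat | (@visit_time T R A theta k' w < (n%:R)%:E)%E /\
                               A (iter n theta w)]]
  end.

Definition in_Lp_ext {d} {T : measurableType d} {R : realType}
  (P : probability T R) (p : R) (f : T -> \bar R) : Prop :=
  measurable_fun [set: T] f /\ (\int[P]_x (poweR `|f x| p) < +oo)%E.

From HB Require Import structures.
From mathcomp Require Import all_boot all_order all_algebra.
From mathcomp Require Import all_classical all_reals all_analysis measurable_realfun.
From mathcomp Require Import ring lra.
Import Order.TTheory GRing.Theory Num.Theory.
Local Open Scope classical_set_scope.
Local Open Scope ring_scope.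

Set Implicit Arguments. Unset Strict Implicit. Unset Printing Implicit Defensive.

(* Let f_n = m_1 (theta^n w) be the time from n to the next visit to A and fix
   b > 1.  Since P is theta-invariant, H = sum_n (n + 1)^-b f_n^p has
   E H = E [m_1^p] * sum_n (n + 1)^-b < oo, so H < oo almost surely.  Along one
   orbit f counts down by one between consecutive visits, so at least N / 2 of
   the first N = m_k times n have f_n >= N / (2 k); hence
   H >= (N / 2) (N / (2 k))^p N^-b, i.e. m_k <= (2^(p+1) H)^(1/s) k^(p/s) with
   s = p + 1 - b.  For b = 1 + p delta / (1 + 2 delta) we get p / s <= 1 + delta
   and s >= p / 2, and B = (2^(p+1) H)^(1/s) satisfies B^q <= 1 + 2^(p+1) H for
   q <= s. *)

Lemma count_countdown_ge (R : realType) (t : R) g : 0 <= t ->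
  g%:R - t <= \sum_(j < g) ((t <= (g - j)%:R)%R : nat)%:R.
Proof.
move=> t0; elim: g => [|g IH]; first by rewrite big_ord0 sub0r oppr_le0.
rewrite big_ord_recl /= subn0.
under eq_bigr => j _ do rewrite /bump /= add1n subSS.
case: (lerP t g.+1%:R) => ht /=; first by rewrite -natr1; move: IH; lra.
apply: le_trans (_ : 0 <= _); last by rewrite add0r sumr_ge0.
by rewrite subr_le0 ltW.
Qed.

Section HittingTimes.
Variable V : nat -> Prop.
Hypothesis V_unbounded : forall n, exists m, (n < m)%N /\ V m.

Lemma next_hit_exists n : exists m, (n < m)%N && `[< V m >].
Proof.
by have [m [nm Vm]] := V_unbounded n; exists m; rewrite nm; apply/asboolP.
Qed.

Definition next_hit n := ex_minn (next_hit_exists n).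
Definition hit k := iter k next_hit 0.
Definition wait n := (next_hit n - n)%N.

Lemma next_hitP n : [/\ (n < next_hit n)%N, V (next_hit n) &
  forall m, (n < m)%N -> V m -> (next_hit n <= m)%N].
Proof.
rewrite /next_hit; case: ex_minnP => m /andP[nm /asboolP Vm] minm.
by split=> // k nk Vk; apply: minm; rewrite nk; apply/asboolP.
Qed.

Lemma next_hit_eq n m : (n <= m)%N -> (m < next_hit n)%N -> next_hit m = next_hit n.
Proof.
move=> nm mn; have [_ Vn minn] := next_hitP n; have [mm Vm minm] := next_hitP m.
by apply/eqP; rewrite eqn_leq minm //= minn // (leq_ltn_trans nm mm).
Qed.

Lemma waitD n j : (j < wait n)%N -> wait (n + j) = (wait n - j)%N.
Proof.
move=> jw; rewrite /wait (@next_hit_eq n) ?leq_addr ?subnDA // -ltn_subRL; exact: jw.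
Qed.

Lemma leq_hit k : (k <= hit k)%N.
Proof.
by elim: k => //= k IH; have [lt_next _ _] := next_hitP (hit k); apply: leq_ltn_trans lt_next.
Qed.

Variable R : realType.
(* Between consecutive hits [wait] counts down to 1, so each of the k runs
   contains at most t indices i with [wait i < t]. *)
Lemma count_wait_ge (t : R) k : 0 <= t ->
  (hit k)%:R - k%:R * t <= \sum_(i < hit k) ((t <= (wait i)%:R)%R : nat)%:R.
Proof.
move=> t0; elim: k => [|k IH]; first by rewrite /= big_ord0 mul0r subr0.
have [lt_next _ _] := next_hitP (hit k).
have hitS : hit k.+1 = (hit k + wait (hit k))%N by rewrite /= /wait subnKC // ltnW.
rewrite hitS big_split_ord /=.
under [X in _ <= _ + X]eq_bigr => j _ do rewrite waitD //.
apply: le_trans (lerD IH (count_countdown_ge _ t0)).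
by rewrite natrD -natr1 mulrDl mul1r; lra.
Qed.

Lemma hit_weighted_sum_ge (p b t : R) k : 0 <= p -> 0 <= b -> 0 <= t ->
  t `^ p * ((hit k)%:R - k%:R * t) / (hit k)%:R `^ b <=
  \sum_(i < hit k) (wait i)%:R `^ p * riemannR b i.
Proof.
move=> p0 b0 t0; set N := hit k.
apply: (@le_trans _ _ (\sum_(i < N) t `^ p / N%:R `^ b * ((t <= (wait i)%:R)%R : nat)%:R)).
  by rewrite -mulr_sumr mulrAC ler_wpM2l ?divr_ge0 ?powR_ge0 ?count_wait_ge.
apply: ler_sum => i _; case: (lerP t (wait i)%:R) => ht /=; last first.
  by rewrite mulr0 mulr_ge0 ?powR_ge0 // ltW ?riemannR_gt0.
have iN : (0 < i.+1 <= N)%N by rewrite ltn_ord.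
rewrite mulr1 ler_pM ?invr_ge0 ?powR_ge0 ?ge0_ler_powR ?nnegrE //.
by rewrite /riemannR lef_pV2 ?posrE ?powR_gt0 ?ge0_ler_powR ?nnegrE ?ler_nat ?ltr0n //;
  apply: leq_trans iN.
Qed.
(* With t = N / (2 k), at least N / 2 of the indices below N = hit k wait at least t. *)
Lemma hit_pow_le (p b h : R) k : 0 < p -> 0 <= b -> (0 < k)%N ->
  \sum_(i < hit k) (wait i)%:R `^ p * riemannR b i <= h ->
  (hit k)%:R `^ (p + 1 - b) <= 2 `^ (p + 1) * k%:R `^ p * h.
Proof.
move=> p0 b0 k0 le_h; set N := hit k.
have N0 : 0 < N%:R :> R by rewrite ltr0n (leq_trans k0 (leq_hit k)).
have k_gt0 : 0 < k%:R :> R by rewrite ltr0n.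
have k_ge0 : 0 <= k%:R :> R by rewrite ler0n.
pose t : R := N%:R / (2 * k%:R).
have t0 : 0 <= t by rewrite divr_ge0 ?mulr_ge0 ?ltW.
have Npow : N%:R `^ p = t `^ p * (2 `^ p * k%:R `^ p).
  have Nt : N%:R = t * (2 * k%:R) by rewrite /t mulfVK // gt_eqF // mulr_gt0.
  by rewrite {1}Nt !powRM // mulr_ge0.
have := le_trans (hit_weighted_sum_ge k (ltW p0) b0 t0) le_h.
have -> : N%:R - k%:R * t = N%:R / 2 by rewrite /t; field; rewrite gt_eqF.
move=> le_th; rewrite powRB ?(gt_eqF N0) ?implybT //.
rewrite !powRD ?(gt_eqF N0) ?pnatr_eq0 ?implybT // !powRr1 ?ler0n // Npow.
have -> : t `^ p * (2 `^ p * k%:R `^ p) * N%:R / N%:R `^ b =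
    2 `^ p * 2 * k%:R `^ p * (t `^ p * (N%:R / 2) / N%:R `^ b).
  by field; rewrite gt_eqF ?powR_gt0.
by rewrite ler_wpM2l ?mulr_ge0 ?powR_ge0.
Qed.

Lemma hit_le (p b h a : R) k : 0 < p -> 0 <= b -> 0 < p + 1 - b -> (0 < k)%N ->
  p / (p + 1 - b) <= a ->
  \sum_(i < hit k) (wait i)%:R `^ p * riemannR b i <= h ->
  (hit k)%:R <= (2 `^ (p + 1) * h) `^ (p + 1 - b)^-1 * k%:R `^ a.
Proof.
move=> p0 b0 s0 k0 pa le_h; set s := p + 1 - b in s0 pa *.
have h0 : 0 <= h.
  apply: le_trans le_h; apply: sumr_ge0 => i _.
  by rewrite mulr_ge0 ?powR_ge0 // ltW // riemannR_gt0.
have k1 : 1 <= k%:R :> R by rewrite ler1n.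
have -> : (hit k)%:R = ((hit k)%:R `^ s) `^ s^-1 :> R.
  by rewrite -powRrM divff ?gt_eqF // powRr1.
apply: le_trans.
  apply: ge0_ler_powR (hit_pow_le p0 b0 k0 le_h);
  by rewrite ?invr_ge0 ?nnegrE ?mulr_ge0 ?powR_ge0 // ltW.
rewrite mulrAC [X in X <= _]powRM ?mulr_ge0 ?powR_ge0 // -powRrM.
by apply: ler_wpM2l; [exact: powR_ge0 | exact: ler_powR].
Qed.

End HittingTimes.

Lemma ereal_inf_nat_min (R : realType) (S : set nat) m : S m ->
  (forall n, S n -> (m <= n)%N) ->
  ereal_inf [set ((n%:R)%:E : \bar R) | n in S] = (m%:R)%:E.
Proof.
move=> Sm Smin; apply/eqP; rewrite eq_le ereal_inf_lbound ?andTb; last by exists m.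
by apply: le_ereal_inf_tmp => _ [n Sn <-]; rewrite lee_fin ler_nat Smin.
Qed.

Section VisitTimes.
Variables (T : Type) (R : realType) (A : set T) (theta : T -> T) (w : T).
Hypothesis visits_unbounded : forall n, exists m, (n < m)%N /\ A (iter m theta w).

Lemma visit_time_hit k :
  @visit_time T R A theta k w = ((hit visits_unbounded k)%:R)%:E.
Proof.
elim: k => //= k ->.
have [lt_next A_next min_next] := next_hitP visits_unbounded (hit visits_unbounded k).
apply: ereal_inf_nat_min; first by split; rewrite // lte_fin ltr_nat.
by move=> n []; rewrite lte_fin ltr_nat; exact: min_next.
Qed.

Lemma visit_time1_iter n :
  @visit_time T R A theta 1 (iter n theta w) = ((wait visits_unbounded n)%:R)%:E.
Proof.
have [lt_next A_next min_next] := next_hitP visits_unbounded n.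
apply: ereal_inf_nat_min.
  by split; rewrite ?lte_fin ?ltr0n ?subn_gt0 // -iterD subnK // ltnW.
move=> m []; rewrite lte_fin ltr0n -iterD => m0 Am.
by rewrite /wait leq_subLR addnC min_next // -{1}(add0n n) ltn_add2r.
Qed.

End VisitTimes.

Lemma visits_unbounded_of_visit_time1 (T : Type) (R : realType) (A : set T)
    (theta : T -> T) (w : T) :
  (forall n, (@visit_time T R A theta 1 (iter n theta w) < +oo)%E) ->
  forall n, exists m, (n < m)%N /\ A (iter m theta w).
Proof.
move=> fin n; have /ereal_inf_lt[_ [i [i0 Ai] <-] _] := fin n.
exists (i + n)%N; split; last by rewrite iterD.
by move: i0; rewrite lte_fin ltr0n -{1}(add0n n) ltn_add2r.
Qed.

Section PowerSums.
Variable R : realType.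
(* Mean value inequality for x |-> x ^ -c, from ln (1 + 1 / x) >= 1 / (x + 1)
   and expR u >= 1 + u. *)
Lemma inv_powR_sub_ge (c x : R) : 0 < c -> 0 < x ->
  c * ((x + 1) `^ (1 + c))^-1 <= (x `^ c)^-1 - ((x + 1) `^ c)^-1.
Proof.
move=> c0 x0; set y := x + 1.
have y1 : 1 < y by rewrite /y; lra.
have y0 : 0 < y by lra.
have ln_ge : y^-1 <= ln y - ln x.
  have yV1 : y^-1 < 1 by rewrite invf_lt1.
  have lnx : ln x = ln y + ln (1 - y^-1).
    by rewrite -lnM ?posrE ?subr_gt0 //; congr ln; rewrite /y; field; lra.
  by have := @le_ln1Dx R (- y^-1); rewrite lnx; lra.
rewrite /powR !gt_eqF //.
have -> : expR ((1 + c) * ln y) = y * expR (c * ln y).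
  by rewrite mulrDl mul1r expRD lnK.
have -> : (expR (c * ln x))^-1 = expR (c * (ln y - ln x)) * (expR (c * ln y))^-1.
  by rewrite -!expRN -expRD; congr expR; ring.
rewrite invfM mulrA -[X in _ <= _ - X]mul1r -mulrBl ler_wpM2r ?invr_ge0 ?expR_ge0 //.
have := expR_ge1Dx (c * (ln y - ln x)).
have : c * y^-1 <= c * (ln y - ln x) by rewrite ler_wpM2l // ltW.
lra.
Qed.

Lemma sum_riemannR_le (c : R) N : 0 < c ->
  \sum_(i < N) riemannR (1 + c) i <= 1 + c^-1.
Proof.
move=> c0; have ic0 : 0 < c^-1 by rewrite invr_gt0.
case: N => [|N]; first by rewrite big_ord0; lra.
rewrite big_ord_recl /riemannR /= powR1 invr1 lerD2l.
pose u i := - ((i.+1%:R : R) `^ c)^-1.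
apply: (@le_trans _ _ (c^-1 * \sum_(0 <= i < N) (u i.+1 - u i))).
  rewrite big_mkord mulr_sumr; apply: ler_sum => i _.
  rewrite /bump /= add1n -(ler_pM2l c0) mulrA mulfV ?gt_eqF // mul1r /u.
  by have := @inv_powR_sub_ge c i.+1%:R c0 (ltr0Sn _ _); rewrite natr1; lra.
rewrite (@telescope_sumr _ 0 N u) // /u powR1 invr1 opprK -[X in _ <= X]mulr1.
by rewrite ler_wpM2l ?ltW // gerBl oppr_le0 invr_ge0 powR_ge0.
Qed.

Lemma nneseries_riemannR_le (c : R) : 0 < c ->
  (\sum_(n <oo) (riemannR (1 + c) n)%:E <= (1 + c^-1)%:E)%E.
Proof.
move=> c0; apply: lime_le.
  by apply: is_cvg_nneseries => n _; rewrite lee_fin ltW // riemannR_gt0 //; lra.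
by apply: nearW => N; rewrite sumEFin lee_fin big_mkord sum_riemannR_le.
Qed.

Lemma powR_le1D (y r : R) : 0 <= y -> 0 <= r <= 1 -> y `^ r <= 1 + y.
Proof.
move=> y0 /andP[r0 r1]; case: (lerP y 1) => hy; last first.
  by apply: le_trans (ler1_powR (ltW hy) r1) _; lra.
apply: (@le_trans _ _ 1); last by lra.
move: y0; rewrite le_eqVlt => /predU1P[<-|yp]; first by rewrite /powR eqxx; case: (r == 0).
by rewrite -[X in _ <= X](powRr0 y) ger_powR // yp hy.
Qed.

End PowerSums.

Definition measure_preserving d (T : measurableType d) (R : realType)
    (mu : {measure set T -> \bar R}) (f : T -> T) :=
  measurable_fun setT f /\ forall S, measurable S -> mu (f @^-1` S) = mu S.

Lemma invertible_mp_preserving d (T : measurableType d) (R : realType)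
    (P : probability T R) (theta : T -> T) :
  invertible_mp P theta -> measure_preserving P theta.
Proof. by case=> mtheta [_ [_ _ _ Ptheta]]. Qed.

Lemma measurable_iter d (T : measurableType d) (f : T -> T) n :
  measurable_fun setT f -> measurable_fun setT (iter n f).
Proof.
move=> mf; elim: n => [|n IH]; first exact: measurable_id.
exact: measurableT_comp mf IH.
Qed.

Section MeasurePreserving.
Context d (T : measurableType d) (R : realType) (mu : {measure set T -> \bar R}).

Lemma measure_preserving_iter f n :
  measure_preserving mu f -> measure_preserving mu (iter n f).
Proof.
case=> mf muf; split=> [|S mS]; first exact: measurable_iter.
elim: n S mS => // n IH S mS.
rewrite /= -[_ @^-1` _]/(iter n f @^-1` (f @^-1` S)) IH ?muf //.
by rewrite -[_ @^-1` S]setTI; exact: mf.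
Qed.

Lemma ge0_integral_preserving f (F : T -> \bar R) : measure_preserving mu f ->
  measurable_fun setT F -> (forall x, 0 <= F x)%E ->
  (\int[mu]_x F (f x) = \int[mu]_x F x)%E.
Proof.
move=> [mf muf] mF F0.
rewrite [RHS](eq_measure_integral (pushforward mu f)); last first.
  by move=> S mS _; exact: esym (muf S mS).
by rewrite [RHS]ge0_integral_pushforward.
Qed.

End MeasurePreserving.

Definition orbit_sum (T : Type) (R : realType) (f : T -> T) (b : R)
    (g : T -> \bar R) (x : T) : \bar R :=
  (\sum_(n <oo) (riemannR b n)%:E * g (iter n f x))%E.

Section OrbitSum.
Variables (T : Type) (R : realType) (f : T -> T) (b : R) (g : T -> \bar R).
Hypothesis g0 : forall x, (0 <= g x)%E.

Lemma orbit_sum_term_ge0 n x : (0 <= (riemannR b n)%:E * g (iter n f x))%E.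
Proof. by rewrite mule_ge0 // lee_fin invr_ge0 powR_ge0. Qed.

Lemma orbit_sum_ge0 x : (0 <= orbit_sum f b g x)%E.
Proof. by apply: nneseries_ge0 => n _ _; exact: orbit_sum_term_ge0. Qed.

Lemma partial_orbit_sum_le x N :
  (\sum_(i < N) (riemannR b i)%:E * g (iter i f x) <= orbit_sum f b g x)%E.
Proof.
have := @nneseries_lim_ge R (fun i => (riemannR b i)%:E * g (iter i f x))%E xpredT 0 N
  (fun i _ _ => orbit_sum_term_ge0 i x).
by rewrite big_mkord.
Qed.

Lemma orbit_sum_fin_num_lt x n : orbit_sum f b g x \is a fin_num ->
  (g (iter n f x) < +oo)%E.
Proof.
move=> fin; rewrite ltey; apply: contraTN fin => /eqP gx.
suff -> : orbit_sum f b g x = +oo%E by [].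
apply: (@nneseries_pinfty _ _ xpredT n) => // [m _|]; first exact: orbit_sum_term_ge0.
by rewrite gx gt0_muley // lte_fin invr_gt0 powR_gt0.
Qed.

End OrbitSum.

Section OrbitSumIntegral.
Context d (T : measurableType d) (R : realType) (mu : {measure set T -> \bar R}).
Variables (f : T -> T) (b : R) (g : T -> \bar R).
Hypotheses (f_mp : measure_preserving mu f) (mg : measurable_fun setT g).
Hypothesis g0 : forall x, (0 <= g x)%E.

Lemma measurable_orbit_sum_term n :
  measurable_fun setT (fun x => (riemannR b n)%:E * g (iter n f x))%E.
Proof. by apply: measurable_funeM; exact: measurableT_comp mg (measurable_iter _ f_mp.1). Qed.

Lemma measurable_orbit_sum : measurable_fun setT (orbit_sum f b g).
Proof.
apply: ge0_emeasurable_sum => [n x _ _|n _]; first exact: orbit_sum_term_ge0.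
exact: measurable_orbit_sum_term.
Qed.

Hypotheses (b1 : 1 < b) (g_int : (\int[mu]_x g x < +oo)%E).

Lemma integral_orbit_sum_lt_pinfty : (\int[mu]_x orbit_sum f b g x < +oo)%E.
Proof.
rewrite /orbit_sum integral_nneseries // => [|n|n x _]; last first.
- exact: orbit_sum_term_ge0.
- exact: measurable_orbit_sum_term.
have gn_int n : (\int[mu]_x ((riemannR b n)%:E * g (iter n f x)) =
    (\int[mu]_x g x) * (riemannR b n)%:E)%E.
  rewrite ge0_integralZl_EFin //; last by rewrite invr_ge0 powR_ge0.
    by rewrite muleC (ge0_integral_preserving (measure_preserving_iter n f_mp)).
  exact: measurableT_comp mg (measurable_iter _ f_mp.1).
under eq_eseriesr do rewrite gn_int.
have I_fin : (\int[mu]_x g x)%E \is a fin_num by rewrite ge0_fin_numE // integral_ge0.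
rewrite -(fineK I_fin) nneseriesZl => [|n _]; last by rewrite lee_fin invr_ge0 powR_ge0.
apply: (@le_lt_trans _ _ ((fine (\int[mu]_x g x)%E)%:E * (1 + (b - 1)^-1)%:E)%E).
  rewrite lee_wpmul2l ?lee_fin ?fine_ge0 ?integral_ge0 //.
  by have := @nneseries_riemannR_le R (b - 1); rewrite subrKC; apply; rewrite subr_gt0.
by rewrite -EFinM ltry.
Qed.

Lemma orbit_sum_fin_num_ae : {ae mu, forall x, orbit_sum f b g x \is a fin_num}.
Proof.
have H_int : mu.-integrable setT (orbit_sum f b g).
  apply/integrableP; split; first exact: measurable_orbit_sum.
  under eq_integral => x _ do rewrite gee0_abs ?orbit_sum_ge0 //.
  exact: integral_orbit_sum_lt_pinfty.
by apply: filterS (integrable_ae measurableT H_int) => x; apply.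
Qed.

End OrbitSumIntegral.

Lemma integral_powR_fine_lt_pinfty d (T : measurableType d) (R : realType)
    (P : probability T R) (H : T -> \bar R) (K r : R) :
  measurable_fun setT H -> (forall x, 0 <= H x)%E -> (\int[P]_x H x < +oo)%E ->
  0 <= K -> 0 <= r <= 1 ->
  (\int[P]_x ((K * fine (H x)) `^ r)%:E < +oo)%E.
Proof.
move=> mH H0 H_int K0 r01.
have mKH : measurable_fun setT (fun x => K * fine (H x)).
  by apply: measurable_funM; [exact: measurable_cst | exact: measurableT_comp mH].
apply: (@le_lt_trans _ _ (\int[P]_x (1 + K%:E * H x))%E).
  apply: ge0_le_integral => //= [x _|||x _]; first by rewrite lee_fin powR_ge0.
  - by apply/measurable_EFinP; exact: measurableT_comp (@measurable_powR R _) mKH.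
  - by apply: emeasurable_funD; [exact: measurable_cst | exact: measurable_funeM].
  apply: (@le_trans _ _ (1 + K * fine (H x))%:E).
    by rewrite lee_fin powR_le1D // mulr_ge0 // fine_ge0.
  rewrite EFinD EFinM leeD2l // lee_wpmul2l ?lee_fin //.
  by have := H0 x; case: (H x).
rewrite ge0_integralD // => [|x _|]; last 2 first.
- by rewrite mule_ge0 ?lee_fin.
- exact: measurable_funeM.
rewrite integral_cst // ge0_integralZl_EFin // mul1e lte_add_pinfty //.
  by apply: le_lt_trans (probability_le1 P measurableT) _; exact: ltry.
by rewrite lte_mul_pinfty ?lee_fin.
Qed.

Section VisitTimeBound.
Variables (T : Type) (R : realType) (A : set T) (theta : T -> T) (p : R).
Local Notation m1 := (@visit_time T R A theta 1).
Local Notation m1_pow := (fun y => poweR `|m1 y| p).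

Lemma visit_time_le_orbit_sum (b a : R) x k :
  0 < p -> 0 <= b -> 0 < p + 1 - b -> p / (p + 1 - b) <= a -> (0 < k)%N ->
  orbit_sum theta b m1_pow x \is a fin_num ->
  (@visit_time T R A theta k x <=
    ((2 `^ (p + 1) * fine (orbit_sum theta b m1_pow x)) `^ (p + 1 - b)^-1 * k%:R `^ a)%:E)%E.
Proof.
move=> p0 b0 s0 pa k0 H_fin.
have m1_pow0 y : (0 <= m1_pow y)%E by exact: poweR_ge0.
have m1_fin n : (m1 (iter n theta x) < +oo)%E.
  have := orbit_sum_fin_num_lt m1_pow0 n H_fin.
  by case: (m1 _) => [r| |] //=; rewrite ?ltry // gt_eqF.
have unb := visits_unbounded_of_visit_time1 m1_fin.
rewrite (visit_time_hit R unb) lee_fin; apply: hit_le => //.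
rewrite -lee_fin (fineK H_fin).
apply: le_trans _ (@partial_orbit_sum_le T R theta b m1_pow m1_pow0 x (hit unb k)).
rewrite -sumEFin; apply: lee_sum => i _.
by rewrite (visit_time1_iter R unb) /= ger0_norm // -EFinM mulrC.
Qed.

End VisitTimeBound.
(* b = 1 + p delta / (1 + 2 delta) gives p / (p + 1 - b) = (1 + 2 delta) / (1 + delta). *)
Lemma weight_exponent_exists (R : realType) (p delta : R) : 0 < p -> 0 < delta ->
  exists2 b, 1 < b & [/\ 0 < p + 1 - b, p / (p + 1 - b) <= 1 + p^-1 + delta &
                         p / 2 - delta <= p + 1 - b].
Proof.
move=> p0 d0; pose c := p * delta / (1 + 2 * delta).
have d2 : 0 < 1 + 2 * delta by lra.
have c0 : 0 < c by rewrite divr_gt0 ?mulr_gt0.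
have sE : p + 1 - (1 + c) = p / 2 + p / (2 * (1 + 2 * delta)).
  by rewrite /c; field; rewrite gt_eqF.
exists (1 + c); first lra.
have s0 : 0 < p / (2 * (1 + 2 * delta)) by rewrite divr_gt0 ?mulr_gt0.
rewrite sE; split; [lra | | lra].
have -> : p / (p / 2 + p / (2 * (1 + 2 * delta))) = (1 + 2 * delta) / (1 + delta).
  by field; rewrite !gt_eqF ?addr_gt0 ?mulr_gt0.
rewrite ler_pdivrMr; last lra.
have : 0 < p^-1 by rewrite invr_gt0.
nra.
Qed.

Theorem lemma9p4 (d : measure_display) (T : measurableType d) (R : realType)
  (P : probability T R) (theta : T -> T) (A : set T) (p : R) :
  invertible_mp P theta ->
  measurable A -> (0 < P A)%E ->
  0 < p ->
  in_Lp_ext P p (@visit_time T R A theta 1) ->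
  forall delta : R, 0 < delta -> delta < p ->
  exists B : T -> R,
    [/\ measurable_fun setT B,
        (0 < p / 2 - delta ->
           (\int[P]_x ((`|B x| `^ (p / 2 - delta))%:E) < +oo)%E) &
        {ae P, forall w, forall k : nat, (1 <= k)%N ->
           (@visit_time T R A theta k w <=
              (B w * (k%:R `^ (1 + p^-1 + delta)))%:E)%E}].
Proof.
move=> /invertible_mp_preserving theta_mp _ _ p0 [m1_mes m1_int] delta d0 _.
have [b b1 [s0 pa qs]] := weight_exponent_exists p0 d0.
pose g y := poweR `|@visit_time T R A theta 1 y| p.
have g0 y : (0 <= g y)%E by exact: poweR_ge0.
have mg : measurable_fun setT g.
  apply: measurableT_comp (measurable_poweR p) _.
  exact: measurableT_comp (@abse_measurable R setT) m1_mes.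
have mH := measurable_orbit_sum b theta_mp mg g0.
exists (fun x => (2 `^ (p + 1) * fine (orbit_sum theta b g x)) `^ (p + 1 - b)^-1); split.
- apply: measurableT_comp (@measurable_powR R _) _.
  by apply: measurable_funM; [exact: measurable_cst | exact: measurableT_comp mH].
- move=> q0; under eq_integral => x _ do rewrite ger0_norm ?powR_ge0 // -powRrM.
  apply: integral_powR_fine_lt_pinfty => //; first exact: orbit_sum_ge0.
    exact: integral_orbit_sum_lt_pinfty.
  apply/andP; split; first by rewrite mulr_ge0 ?invr_ge0 ?(ltW s0) ?(ltW q0).
  by rewrite ler_pdivrMl // mulr1.
- apply: filterS (orbit_sum_fin_num_ae theta_mp mg g0 b1 m1_int) => x H_fin k k1.
  by apply: visit_time_le_orbit_sum => //; lra.
Qed.
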